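(* Let $\mathcal K$ be a 2-category, let $(V,\psi),(W,\phi):(t,\mu,\eta)\to(t',\mu',\eta')$ be 1-cells in $\mathrm{EM}^w(\mathcal K)$ and let $\omega:V\Rightarrow W$ be a 2-cell in $\mathcal K$. (1) The following are equivalent: (i) $\omega t\ast\psi\ast\eta'V$ is a 2-cell $(V,\psi)\Rightarrow(W,\phi)$ in $\mathrm{EM}^w(\mathcal K)$; (ii) $\omega t\ast\psi=W\mu\ast\phi t\ast t'\omega t\ast t'\psi\ast t'\eta'V$; (iii) $W\mu\ast\phi t\ast\eta'Wt\ast\omega t\ast\psi\ast\eta'V=\omega t\ast\psi\ast\eta'V$ and $W\mu\ast\phi t\ast\eta'Wt\ast\omega t\ast\psi=W\mu\ast\phi t\ast t'\omega t\ast t'\psi\ast t'\eta'V$. (2) The following are equivalent: (i) $\phi\ast\eta'W\ast\omega$ is a 2-cell $(V,\psi)\Rightarrow(W,\phi)$ in $\mathrm{EM}^w(\mathcal K)$; (ii) $\phi\ast t'\omega=W\mu\ast\phi t\ast\eta'Wt\ast\omega t\ast\psi$; (iii) $W\mu\ast\phi t\ast\eta'Wt\ast\omega t\ast\psi\ast\eta'V=\phi\ast\eta'W\ast\omega$ and $W\mu\ast\phi t\ast\eta'Wt\ast\omega t\ast\psi=W\mu\ast\phi t\ast t'\omega t\ast t'\psi\ast t'\eta'V$. (3) The following are equivalent: (i) $\phi\ast t'\omega=\omega t\ast\psi$; (ii) both $\phi\ast\eta'W\ast\omega$ and $\omega t\ast\psi\ast\eta'V$ are 2-cells $(V,\psi)\Rightarrow(W,\phi)$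 in $\mathrm{EM}^w(\mathcal K)$. Moreover, when these hold, $\phi\ast\eta'W\ast\omega=\omega t\ast\psi\ast\eta'V$.
   Context: Conventions in a 2-category $\mathcal K$: horizontal composition and whiskering by juxtaposition in the order of functor composition ($V:k\to k'$, $V':k'\to k''$ give $V'V$); identity 1-cell of $k$ written $k$, identity 2-cell of $V$ written $V$; vertical composition $\ast$ with $\alpha\ast\beta$ meaning $\beta$ then $\alpha$. A monad $(t,\mu,\eta)$ on $k$: $t:k\to k$, $\mu:tt\Rightarrow t$, $\eta:k\Rightarrow t$, $\mu\ast\mu t=\mu\ast t\mu$, $\mu\ast\eta t=t=\mu\ast t\eta$. The 2-category $\mathrm{EM}^w(\mathcal K)$: 0-cells are monads in $\mathcal K$; a 1-cell $(t,\mu,\eta)\to(t',\mu',\eta')$ ($t$ on $k$, $t'$ on $k'$) is a pair $(V,\psi)$, $V:k\to k'$, $\psi:t'V\Rightarrow Vt$, with $V\mu\ast\psi t\ast t'\psi=\psi\ast\mu'V$; a 2-cell $(V,\psi)\Rightarrow(W,\phi)$ is a 2-cell $\varrho:V\Rightarrow Wt$ of $\mathcal K$ with (a) $W\mu\ast\varrho t\ast\psi=W\mu\ast\phi t\ast t'\varrho$ and (b) $\varrho=W\mu\ast\phi t\ast\eta'Wt\ast\varrho$. *)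

Set Implicit Arguments.
Unset Strict Implicit.

Record TwoCatData := {
  Obj : Type;
  Hom : Obj -> Obj -> Type;
  Cell : forall a b : Obj, Hom a b -> Hom a b -> Type;
  id1 : forall a : Obj, Hom a a;
  (* comp1 g f = "g f" : first f, then g (order of functor composition) *)
  comp1 : forall a b c : Obj, Hom b c -> Hom a b -> Hom a c;
  id2 : forall (a b : Obj) (f : Hom a b), Cell f f;
  (* vcomp beta alpha = "beta * alpha" : first alpha, then beta *)
  vcomp : forall (a b : Obj) (f g h : Hom a b), Cell g h -> Cell f g -> Cell f h;
  hcomp : forall (a b c : Obj) (g g' : Hom b c) (f f' : Hom a b),
      Cell g g' -> Cell f f' -> Cell (comp1 g f) (comp1 g' f')
}.

Arguments Hom {K} a b : rename.
Arguments Cell {K a b} f g : rename.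
Arguments id1 {K} a : rename.
Arguments comp1 {K a b c} g f : rename.
Arguments id2 {K a b} f : rename.
Arguments vcomp {K a b f g h} beta alpha : rename.
Arguments hcomp {K a b c g g' f f'} beta alpha : rename.

Definition eqcell (K : TwoCatData) (a b : Obj K) (f g : Hom a b) (e : f = g)
  : Cell f g :=
  match e in _ = g' return Cell f g' with eq_refl => id2 f end.
Arguments eqcell {K a b f g} e.

Declare Scope cell_scope.
Delimit Scope cell_scope with cell.
Notation "beta ** alpha" := (vcomp beta alpha)
  (at level 40, left associativity) : cell_scope.
Open Scope cell_scope.

Record is_TwoCat (K : TwoCatData) : Prop := {
  comp1_assoc : forall (a b c d : Obj K) (f : Hom a b) (g : Hom b c) (h : Hom c d),
      comp1 h (comp1 g f) = comp1 (comp1 h g) f;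
  comp1_id_l : forall (a b : Obj K) (f : Hom a b), comp1 (id1 b) f = f;
  comp1_id_r : forall (a b : Obj K) (f : Hom a b), comp1 f (id1 a) = f;
  vcomp_assoc : forall (a b : Obj K) (f g h i : Hom a b)
      (gamma : Cell h i) (beta : Cell g h) (alpha : Cell f g),
      gamma ** (beta ** alpha) = (gamma ** beta) ** alpha;
  vcomp_id_l : forall (a b : Obj K) (f g : Hom a b) (alpha : Cell f g),
      id2 g ** alpha = alpha;
  vcomp_id_r : forall (a b : Obj K) (f g : Hom a b) (alpha : Cell f g),
      alpha ** id2 f = alpha;
  hcomp_id : forall (a b c : Obj K) (g : Hom b c) (f : Hom a b),
      hcomp (id2 g) (id2 f) = id2 (comp1 g f);
  interchange : forall (a b c : Obj K) (g g' g'' : Hom b c) (f f' f'' : Hom a b)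
      (beta' : Cell g' g'') (beta : Cell g g') (alpha' : Cell f' f'') (alpha : Cell f f'),
      hcomp (beta' ** beta) (alpha' ** alpha) = hcomp beta' alpha' ** hcomp beta alpha;
  hcomp_assoc : forall (a b c d : Obj K) (f f' : Hom a b) (g g' : Hom b c) (h h' : Hom c d)
      (alpha : Cell f f') (beta : Cell g g') (gamma : Cell h h'),
      eqcell (comp1_assoc f' g' h') ** hcomp gamma (hcomp beta alpha)
      = hcomp (hcomp gamma beta) alpha ** eqcell (comp1_assoc f g h);
  hcomp_id_l : forall (a b : Obj K) (f f' : Hom a b) (alpha : Cell f f'),
      eqcell (comp1_id_l f') ** hcomp (id2 (id1 b)) alpha = alpha ** eqcell (comp1_id_l f);
  hcomp_id_r : forall (a b : Obj K) (f f' : Hom a b) (alpha : Cell f f'),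
      eqcell (comp1_id_r f') ** hcomp alpha (id2 (id1 a)) = alpha ** eqcell (comp1_id_r f)
}.

Record TwoCat := { tc_data :> TwoCatData; tc_axioms : is_TwoCat tc_data }.

Section Cells.
Variable K : TwoCat.

(* wl V alpha = "V alpha" *)
Definition wl (a b c : Obj K) (V : Hom b c) (f g : Hom a b) (alpha : Cell f g)
  : Cell (comp1 V f) (comp1 V g) := hcomp (id2 V) alpha.
(* wr alpha t = "alpha t" *)
Definition wr (a b c : Obj K) (f g : Hom b c) (alpha : Cell f g) (t : Hom a b)
  : Cell (comp1 f t) (comp1 g t) := hcomp alpha (id2 t).

(** Identity 2-cells between the (equal) bracketings of composites; in a strict
    2-category these are identities, we insert them only to make the composites
    typecheck. *)
Definition asc (a b c d : Obj K) (f : Hom a b) (g : Hom b c) (h : Hom c d)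
  : Cell (comp1 h (comp1 g f)) (comp1 (comp1 h g) f) :=
  eqcell (comp1_assoc (tc_axioms K) f g h).
Definition asc' (a b c d : Obj K) (f : Hom a b) (g : Hom b c) (h : Hom c d)
  : Cell (comp1 (comp1 h g) f) (comp1 h (comp1 g f)) :=
  eqcell (eq_sym (comp1_assoc (tc_axioms K) f g h)).
Definition lu (a b : Obj K) (f : Hom a b) : Cell (comp1 (id1 b) f) f :=
  eqcell (comp1_id_l (tc_axioms K) f).
Definition lu' (a b : Obj K) (f : Hom a b) : Cell f (comp1 (id1 b) f) :=
  eqcell (eq_sym (comp1_id_l (tc_axioms K) f)).
Definition ru (a b : Obj K) (f : Hom a b) : Cell (comp1 f (id1 a)) f :=
  eqcell (comp1_id_r (tc_axioms K) f).
End Cells.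

Arguments wl {K a b c} V {f g} alpha.
Arguments wr {K a b c f g} alpha t.
Arguments asc {K a b c d} f g h.
Arguments asc' {K a b c d} f g h.
Arguments lu {K a b} f.
Arguments lu' {K a b} f.
Arguments ru {K a b} f.

Definition is_monad (K : TwoCat) (k : Obj K) (t : Hom k k)
    (mu : Cell (comp1 t t) t) (eta : Cell (id1 k) t) : Prop :=
  mu ** wr mu t ** asc t t t = mu ** wl t mu
  /\ mu ** wr eta t = lu t
  /\ mu ** wl t eta = ru t.

Definition is_EM1cell (K : TwoCat) (k k' : Obj K)
    (t : Hom k k) (mu : Cell (comp1 t t) t)
    (t' : Hom k' k') (mu' : Cell (comp1 t' t') t')
    (V : Hom k k') (psi : Cell (comp1 t' V) (comp1 V t)) : Prop :=
  wl V mu ** asc' t t V ** wr psi t ** asc t V t' ** wl t' psi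
  = psi ** wr mu' V ** asc V t' t'.

Definition is_EM2cell (K : TwoCat) (k k' : Obj K)
    (t : Hom k k) (mu : Cell (comp1 t t) t)
    (t' : Hom k' k') (eta' : Cell (id1 k') t')
    (V : Hom k k') (psi : Cell (comp1 t' V) (comp1 V t))
    (W : Hom k k') (phi : Cell (comp1 t' W) (comp1 W t))
    (rho : Cell V (comp1 W t)) : Prop :=
  wl W mu ** asc' t t W ** wr rho t ** psi
    = wl W mu ** asc' t t W ** wr phi t ** asc t W t' ** wl t' rho
  /\ rho = wl W mu ** asc' t t W ** wr phi t ** asc t W t'
             ** wr eta' (comp1 W t) ** lu' (comp1 W t) ** rho.

(* The cell [act phi = W mu * phi t] is an associative left action of [t'] on
   [W t], by the 1-cell axiom for [phi] and associativity of [mu], which also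
   commutes with the right action [W mu]; it need not be unital, so
   [act_unit phi = W mu * phi t * eta' W t] is only idempotent on cells of the
   form [act phi * t' tau].  For [omega t * psi * eta' V], naturality of [eta']
   together with the 1-cell axiom for [psi] and a unit law of [mu'] collapses
   the left side of condition (a) to [omega t * psi]; dually, for
   [phi * eta' W * omega] the right side of (a) collapses to [phi * t' omega].
   Condition (b) is then automatic (for the first cell, given (a)), and the
   three parts are short equational consequences of these collapses. *)

From Stdlib Require Import ProofIrrelevance Setoid.
Set Implicit Arguments.
Unset Strict Implicit.

Section TwoCategory.
Variable K : TwoCat.

Lemma vcompA (a b : Obj K) (f g h i : Hom a b)
  (x : Cell h i) (y : Cell g h) (z : Cell f g) : x ** (y ** z) = (x ** y) ** z.
Proof. apply (vcomp_assoc (tc_axioms K)). Qed.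

Lemma id2_vcomp (a b : Obj K) (f g : Hom a b) (x : Cell f g) : id2 g ** x = x.
Proof. apply (vcomp_id_l (tc_axioms K)). Qed.

Lemma vcomp_id2 (a b : Obj K) (f g : Hom a b) (x : Cell f g) : x ** id2 f = x.
Proof. apply (vcomp_id_r (tc_axioms K)). Qed.

Lemma vcomp_congr (a b : Obj K) (f g h : Hom a b) (x x' : Cell g h) (y y' : Cell f g) :
  x = x' -> y = y' -> x ** y = x' ** y'.
Proof. intros -> ->. reflexivity. Qed.

Lemma eqcell_irrelevance (a b : Obj K) (f g : Hom a b) (e1 e2 : f = g) :
  eqcell e1 = eqcell e2.
Proof. rewrite (proof_irrelevance _ e1 e2). reflexivity. Qed.

Lemma eqcell_id2 (a b : Obj K) (f : Hom a b) (e : f = f) : eqcell e = id2 f.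
Proof. exact (eqcell_irrelevance e eq_refl). Qed.

Lemma eqcell_vcomp (a b : Obj K) (f g h : Hom a b) (e1 : g = h) (e2 : f = g) :
  eqcell e1 ** eqcell e2 = eqcell (eq_trans e2 e1).
Proof. destruct e1, e2. apply id2_vcomp. Qed.

Lemma eqcell_vcompr (a b : Obj K) (f g h i : Hom a b) (e1 : g = h) (e2 : f = g)
  (r : Cell i f) : eqcell e1 ** (eqcell e2 ** r) = eqcell (eq_trans e2 e1) ** r.
Proof. rewrite vcompA, eqcell_vcomp. reflexivity. Qed.

Lemma wl_eqcell (a b c : Obj K) (V : Hom b c) (f g : Hom a b) (e : f = g) :
  wl V (eqcell e) = eqcell (f_equal (comp1 V) e).
Proof. destruct e. apply (hcomp_id (tc_axioms K)). Qed.

Lemma wr_eqcell (a b c : Obj K) (t : Hom a b) (f g : Hom b c) (e : f = g) :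
  wr (eqcell e) t = eqcell (f_equal (fun x => comp1 x t) e).
Proof. destruct e. apply (hcomp_id (tc_axioms K)). Qed.

Lemma wl_vcomp (a b c : Obj K) (V : Hom b c) (f g h : Hom a b)
  (x : Cell g h) (y : Cell f g) : wl V (x ** y) = wl V x ** wl V y.
Proof. unfold wl. rewrite <- (interchange (tc_axioms K)), id2_vcomp. reflexivity. Qed.

Lemma wr_vcomp (a b c : Obj K) (t : Hom a b) (f g h : Hom b c)
  (x : Cell g h) (y : Cell f g) : wr (x ** y) t = wr x t ** wr y t.
Proof. unfold wr. rewrite <- (interchange (tc_axioms K)), id2_vcomp. reflexivity. Qed.

Lemma hcomp_wr_wl (a b c : Obj K) (g g' : Hom b c) (f f' : Hom a b)
  (beta : Cell g g') (alpha : Cell f f') : hcomp beta alpha = wr beta f' ** wl g alpha.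
Proof.
  unfold wl, wr. rewrite <- (interchange (tc_axioms K)), id2_vcomp, vcomp_id2.
  reflexivity.
Qed.

Lemma hcomp_wl_wr (a b c : Obj K) (g g' : Hom b c) (f f' : Hom a b)
  (beta : Cell g g') (alpha : Cell f f') : hcomp beta alpha = wl g' alpha ** wr beta f.
Proof.
  unfold wl, wr. rewrite <- (interchange (tc_axioms K)), id2_vcomp, vcomp_id2.
  reflexivity.
Qed.

Lemma asc_wl_wl (a b c d : Obj K) (f f' : Hom a b) (g : Hom b c) (h : Hom c d)
  (alpha : Cell f f') : asc f' g h ** wl h (wl g alpha) = wl (comp1 h g) alpha ** asc f g h.
Proof.
  unfold asc, wl.
  rewrite <- (hcomp_id (tc_axioms K) h g).
  exact (hcomp_assoc (tc_axioms K) alpha (id2 g) (id2 h)).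
Qed.

Lemma asc_wr_wr (a b c d : Obj K) (f : Hom a b) (g : Hom b c) (h h' : Hom c d)
  (gamma : Cell h h') : asc f g h' ** wr gamma (comp1 g f) = wr (wr gamma g) f ** asc f g h.
Proof.
  unfold asc, wr.
  rewrite <- (hcomp_id (tc_axioms K) g f).
  exact (hcomp_assoc (tc_axioms K) (id2 f) (id2 g) gamma).
Qed.

Lemma asc_wl_wr (a b c d : Obj K) (f : Hom a b) (g g' : Hom b c) (h : Hom c d)
  (beta : Cell g g') : asc f g' h ** wl h (wr beta f) = wr (wl h beta) f ** asc f g h.
Proof. exact (hcomp_assoc (tc_axioms K) (id2 f) beta (id2 h)). Qed.

End TwoCategory.

Ltac right_assoc := repeat rewrite <- vcompA.

(* Rewrites with [l = r] in a right-associated composite, also where [l] is a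
   middle segment of it: the equation is first extended by an arbitrary cell on
   the right. *)
Ltac rewrite_cell H :=
  let T := type of H in
  lazymatch T with @eq (@Cell ?K ?a ?b ?f ?g) ?l ?r =>
    let Hext := fresh "Hext" in
    assert (Hext : forall (f0 : Hom a b) (r0 : Cell f0 f), l ** r0 = r ** r0)
      by (intros f0 r0; rewrite H; reflexivity);
    let Hr := fresh "Hr" in pose proof H as Hr;
    repeat setoid_rewrite <- vcompA in Hext; repeat rewrite <- vcompA in Hr;
    first [rewrite Hext | rewrite Hr]; clear Hext Hr; right_assoc
  end.

(* Cancels the identity cells [eqcell _] coming from the strict unit and
   associativity equations; this is where proof irrelevance is used. *)
Ltac coherence :=
  unfold asc, asc', lu, lu', ru in *;
  repeat rewrite ?wl_eqcell, ?wr_eqcell;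
  right_assoc;
  repeat (rewrite eqcell_vcompr || rewrite eqcell_vcomp);
  repeat rewrite eqcell_id2; repeat rewrite ?id2_vcomp, ?vcomp_id2.

Ltac cells_congr :=
  repeat first [reflexivity | apply eqcell_irrelevance | apply vcomp_congr].

Lemma lu'_natural (K : TwoCat) (a b : Obj K) (f f' : Hom a b) (alpha : Cell f f') :
  wl (id1 b) alpha ** lu' f = lu' f' ** alpha.
Proof.
  pose proof (hcomp_id_l (tc_axioms K) alpha) as hcomp_id1.
  set (e := comp1_id_l (tc_axioms K)) in hcomp_id1.
  transitivity (eqcell (eq_sym (e _ _ f')) ** (alpha ** eqcell (e _ _ f))
                ** eqcell (eq_sym (e _ _ f))).
  - rewrite <- hcomp_id1. unfold wl. coherence. reflexivity.
  - coherence. reflexivity.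
Qed.

Section Monads.
Variables (K : TwoCat) (k k' : Obj K).
Variables (t : Hom k k) (mu : Cell (comp1 t t) t).
Variables (t' : Hom k' k') (mu' : Cell (comp1 t' t') t') (eta' : Cell (id1 k') t').
Hypothesis mu_assoc : mu ** wr mu t ** asc t t t = mu ** wl t mu.
Hypothesis mu'_unit_l : mu' ** wr eta' t' = lu t'.
Hypothesis mu'_unit_r : mu' ** wl t' eta' = ru t'.

(* In the notation of the paper, [rmul X], [lmul X], [lunit X] are [X mu],
   [mu' X], [eta' X]. *)
Definition rmul (X : Hom k k') : Cell (comp1 (comp1 X t) t) (comp1 X t) :=
  wl X mu ** asc' t t X.
Definition lmul (X : Hom k k') : Cell (comp1 t' (comp1 t' X)) (comp1 t' X) :=
  wr mu' X ** asc X t' t'.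
Definition lunit (X : Hom k k') : Cell X (comp1 t' X) := wr eta' X ** lu' X.

Lemma lunit_natural (X Y : Hom k k') (s : Cell X Y) : lunit Y ** s = wl t' s ** lunit X.
Proof.
  unfold lunit. right_assoc.
  rewrite_cell (eq_sym (lu'_natural s)).
  rewrite_cell (eq_sym (hcomp_wr_wl eta' s)). rewrite_cell (hcomp_wl_wr eta' s).
  reflexivity.
Qed.

Lemma lmul_natural (X Y : Hom k k') (s : Cell X Y) :
  lmul Y ** wl t' (wl t' s) = wl t' s ** lmul X.
Proof.
  unfold lmul. right_assoc.
  rewrite_cell (asc_wl_wl t' t' s).
  rewrite_cell (eq_sym (hcomp_wr_wl mu' s)). rewrite_cell (hcomp_wl_wr mu' s).
  reflexivity.
Qed.

Lemma rmul_natural (X Y : Hom k k') (s : Cell X Y) :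
  rmul Y ** wr (wr s t) t = wr s t ** rmul X.
Proof.
  unfold rmul. right_assoc.
  assert (asc'_wr_wr : asc' t t Y ** wr (wr s t) t = wr s (comp1 t t) ** asc' t t X).
  { transitivity (asc' t t Y ** (wr (wr s t) t ** (asc t t X ** asc' t t X))).
    - coherence. reflexivity.
    - right_assoc. rewrite_cell (eq_sym (asc_wr_wr t t s)). coherence. reflexivity. }
  rewrite_cell asc'_wr_wr.
  rewrite_cell (eq_sym (hcomp_wl_wr s mu)). rewrite_cell (hcomp_wr_wl s mu).
  reflexivity.
Qed.

Lemma lmul_lunit (X : Hom k k') : lmul X ** lunit (comp1 t' X) = id2 (comp1 t' X).
Proof.
  unfold lmul, lunit. right_assoc.
  rewrite_cell (asc_wr_wr X t' eta'). rewrite_cell (eq_sym (wr_vcomp X mu' (wr eta' t'))).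
  rewrite mu'_unit_l. coherence. reflexivity.
Qed.

Lemma lmul_wl_lunit (X : Hom k k') : lmul X ** wl t' (lunit X) = id2 (comp1 t' X).
Proof.
  unfold lmul, lunit. rewrite wl_vcomp. right_assoc.
  rewrite_cell (asc_wl_wr X t' eta'). rewrite_cell (eq_sym (wr_vcomp X mu' (wl t' eta'))).
  rewrite mu'_unit_r. coherence. reflexivity.
Qed.

Lemma rmul_assoc (X : Hom k k') :
  rmul X ** wr (rmul X) t = rmul X ** rmul (comp1 X t).
Proof.
  assert (mu_assoc' : mu ** wr mu t = mu ** wl t mu ** asc' t t t).
  { rewrite <- mu_assoc. right_assoc. coherence. reflexivity. }
  assert (wr_wl_mu : wr (wl X mu) t = asc t t X ** wl X (wr mu t) ** asc' t (comp1 t t) X).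
  { right_assoc. rewrite_cell (asc_wl_wr t X mu). coherence. reflexivity. }
  assert (wl_wl_mu :
    wl (comp1 X t) mu = asc t t X ** wl X (wl t mu) ** asc' (comp1 t t) t X).
  { right_assoc. rewrite_cell (asc_wl_wl t X mu). coherence. reflexivity. }
  unfold rmul. rewrite wr_vcomp, wr_wl_mu, wl_wl_mu. right_assoc. coherence.
  rewrite_cell (eq_sym (wl_vcomp X mu (wr mu t))). rewrite mu_assoc', !wl_vcomp.
  coherence. cells_congr.
Qed.

Lemma wr_lmul (X : Hom k k') :
  wr (lmul X) t ** asc t (comp1 t' X) t' ** wl t' (asc t X t')
  = asc t X t' ** lmul (comp1 X t).
Proof.
  unfold lmul. right_assoc. rewrite_cell (asc_wr_wr t X mu'). rewrite wr_vcomp.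
  coherence. cells_congr.
Qed.

Lemma wl_rmul (X : Hom k k') :
  asc t X t' ** wl t' (rmul X)
  = rmul (comp1 t' X) ** wr (asc t X t') t ** asc t (comp1 X t) t'.
Proof.
  unfold rmul. rewrite wl_vcomp. right_assoc. rewrite_cell (asc_wl_wl X t' mu).
  coherence. cells_congr.
Qed.

Lemma wr_lunit (X : Hom k k') : wr (lunit X) t = asc t X t' ** lunit (comp1 X t).
Proof.
  unfold lunit. right_assoc. rewrite_cell (asc_wr_wr t X eta'). rewrite wr_vcomp.
  coherence. cells_congr.
Qed.

Lemma rmulE (X : Hom k k') : rmul X = wl X mu ** asc' t t X.
Proof. reflexivity. Qed.
Lemma lmulE (X : Hom k k') : lmul X = wr mu' X ** asc X t' t'.
Proof. reflexivity. Qed.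
Lemma lunitE (X : Hom k k') : lunit X = wr eta' X ** lu' X.
Proof. reflexivity. Qed.

(* Keeps [rewrite] from unfolding these composites while reassociating. *)
Local Opaque rmul lmul lunit.

Definition act (W : Hom k k') (phi : Cell (comp1 t' W) (comp1 W t))
  : Cell (comp1 t' (comp1 W t)) (comp1 W t) :=
  rmul W ** wr phi t ** asc t W t'.
Definition act_unit (W : Hom k k') (phi : Cell (comp1 t' W) (comp1 W t))
  : Cell (comp1 W t) (comp1 W t) :=
  act phi ** wr eta' (comp1 W t) ** lu' (comp1 W t).

Lemma actE (W : Hom k k') (phi : Cell (comp1 t' W) (comp1 W t)) :
  act phi = rmul W ** wr phi t ** asc t W t'.
Proof. reflexivity. Qed.

Lemma act_unitE (W : Hom k k') (phi : Cell (comp1 t' W) (comp1 W t)) :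
  act_unit phi = act phi ** wr eta' (comp1 W t) ** lu' (comp1 W t).
Proof. reflexivity. Qed.

Lemma act_unit_vcomp (W X : Hom k k') (phi : Cell (comp1 t' W) (comp1 W t))
  (s : Cell X (comp1 W t)) : act_unit phi ** s = act phi ** wl t' s ** lunit X.
Proof.
  rewrite act_unitE. transitivity (act phi ** (lunit (comp1 W t) ** s)).
  - rewrite lunitE. right_assoc. reflexivity.
  - rewrite lunit_natural. apply vcompA.
Qed.

Local Opaque act act_unit.

Lemma rmul_act (W : Hom k k') (phi : Cell (comp1 t' W) (comp1 W t)) :
  rmul W ** wr (act phi) t ** asc t (comp1 W t) t' = act phi ** wl t' (rmul W).
Proof.
  rewrite !actE, !wr_vcomp. right_assoc.
  rewrite_cell (wl_rmul W). rewrite_cell (eq_sym (rmul_natural phi)).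
  rewrite_cell (eq_sym (rmul_assoc W)). reflexivity.
Qed.

Lemma rmul_act_unit (V W : Hom k k') (psi : Cell (comp1 t' V) (comp1 V t))
  (phi : Cell (comp1 t' W) (comp1 W t)) (tau : Cell V (comp1 W t)) :
  rmul W ** wr (act_unit phi ** tau) t ** psi = act_unit phi ** (rmul W ** wr tau t ** psi).
Proof.
  rewrite !act_unit_vcomp, !wr_vcomp. right_assoc.
  rewrite_cell (wr_lunit V). rewrite_cell (lunit_natural psi).
  rewrite_cell (eq_sym (asc_wl_wr t t' tau)). rewrite_cell (rmul_act phi).
  rewrite !wl_vcomp. right_assoc. reflexivity.
Qed.

Section Action.
Variables (W : Hom k k') (phi : Cell (comp1 t' W) (comp1 W t)).
Hypothesis phi_EM1cell : is_EM1cell mu mu' phi.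

Lemma act_wl_phi : act phi ** wl t' phi = phi ** lmul W.
Proof.
  generalize phi_EM1cell. unfold is_EM1cell. rewrite actE, rmulE, lmulE. intro H.
  right_assoc. repeat rewrite <- vcompA in H. exact H.
Qed.

Lemma act_assoc : act phi ** wl t' (act phi) = act phi ** lmul (comp1 W t).
Proof.
  rewrite (actE phi) at 2. rewrite !wl_vcomp. right_assoc.
  rewrite_cell (eq_sym (rmul_act phi)). rewrite_cell (asc_wl_wr t t' phi).
  rewrite_cell (eq_sym (wr_vcomp t (act phi) (wl t' phi))). rewrite act_wl_phi.
  rewrite wr_vcomp. right_assoc. rewrite_cell (wr_lmul W).
  rewrite actE. right_assoc. reflexivity.
Qed.

Lemma act_wl_act (X : Hom k k') (tau : Cell X (comp1 W t)) :
  act phi ** wl t' (act phi ** wl t' tau) = act phi ** wl t' tau ** lmul X.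
Proof.
  rewrite wl_vcomp. right_assoc. rewrite_cell act_assoc.
  rewrite_cell (lmul_natural tau). reflexivity.
Qed.

Lemma act_unit_act (X : Hom k k') (tau : Cell X (comp1 W t)) :
  act_unit phi ** (act phi ** wl t' tau) = act phi ** wl t' tau.
Proof.
  rewrite act_unit_vcomp, act_wl_act. right_assoc.
  rewrite_cell (lmul_lunit X). rewrite vcomp_id2. reflexivity.
Qed.

Lemma act_wl_act_lunit (X : Hom k k') (tau : Cell X (comp1 W t)) :
  act phi ** wl t' (act phi ** wl t' tau ** lunit X) = act phi ** wl t' tau.
Proof.
  rewrite wl_vcomp, vcompA, act_wl_act. right_assoc.
  rewrite_cell (lmul_wl_lunit X). rewrite vcomp_id2. reflexivity.
Qed.

End Action.
Section Lifts.
Variables (V : Hom k k') (psi : Cell (comp1 t' V) (comp1 V t)).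
Variables (W : Hom k k') (phi : Cell (comp1 t' W) (comp1 W t)).
Hypothesis psi_EM1cell : is_EM1cell mu mu' psi.
Hypothesis phi_EM1cell : is_EM1cell mu mu' phi.
Variable omega : Cell V W.

Definition lift_psi : Cell V (comp1 W t) := wr omega t ** psi ** wr eta' V ** lu' V.
Definition lift_phi : Cell V (comp1 W t) := phi ** wr eta' W ** lu' W ** omega.

Lemma lift_psiE : lift_psi = wr omega t ** psi ** lunit V.
Proof. unfold lift_psi. rewrite lunitE. right_assoc. reflexivity. Qed.

Lemma lift_phiE : lift_phi = phi ** wl t' omega ** lunit V.
Proof.
  unfold lift_phi. right_assoc. rewrite (vcompA (wr eta' W)), <- lunitE.
  rewrite lunit_natural. reflexivity.
Qed.

Lemma act_wl_lift_psi :
  act phi ** wl t' (wr omega t) ** wl t' psi ** wl t' (wr eta' V) ** wl t' (lu' V)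
  = act phi ** wl t' lift_psi.
Proof. unfold lift_psi. rewrite !wl_vcomp. right_assoc. reflexivity. Qed.

Lemma rmul_lift_phi : rmul W ** wr lift_phi t ** psi = act_unit phi ** (wr omega t ** psi).
Proof.
  unfold lift_phi.
  rewrite <- (vcompA phi), <- lunitE, !wr_vcomp, wr_lunit, act_unitE, actE, lunitE.
  right_assoc. reflexivity.
Qed.

Local Opaque lift_psi lift_phi.

Lemma is_EM2cellE (rho : Cell V (comp1 W t)) :
  is_EM2cell mu eta' psi phi rho
  <-> rmul W ** wr rho t ** psi = act phi ** wl t' rho /\ rho = act_unit phi ** rho.
Proof. rewrite act_unitE, actE, rmulE. reflexivity. Qed.

Lemma rmul_lift_psi : rmul W ** wr lift_psi t ** psi = wr omega t ** psi.
Proof.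
  pose proof (act_wl_phi psi_EM1cell) as psi_act. rewrite actE in psi_act.
  rewrite lift_psiE, !wr_vcomp. right_assoc.
  rewrite_cell (rmul_natural omega). rewrite_cell (wr_lunit V).
  rewrite_cell (lunit_natural psi). rewrite_cell psi_act.
  rewrite_cell (lmul_lunit V). rewrite vcomp_id2. reflexivity.
Qed.

Lemma act_lift_phi : act phi ** wl t' lift_phi = phi ** wl t' omega.
Proof.
  rewrite lift_phiE, !wl_vcomp. right_assoc.
  rewrite_cell (act_wl_phi phi_EM1cell). rewrite_cell (lmul_natural omega).
  rewrite_cell (lmul_wl_lunit V). rewrite vcomp_id2. reflexivity.
Qed.

Lemma act_wl_phi_omega :
  act phi ** wl t' (phi ** wl t' omega) = phi ** wl t' omega ** lmul V.
Proof.
  rewrite wl_vcomp. right_assoc.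
  rewrite_cell (act_wl_phi phi_EM1cell). rewrite_cell (lmul_natural omega). reflexivity.
Qed.

Lemma act_unit_lift_phi : act_unit phi ** lift_phi = lift_phi.
Proof. rewrite act_unit_vcomp, act_lift_phi. symmetry. apply lift_phiE. Qed.

Lemma act_unit_lift_psi :
  wr omega t ** psi = act phi ** wl t' lift_psi -> act_unit phi ** lift_psi = lift_psi.
Proof. intro H. rewrite act_unit_vcomp, <- H. symmetry. apply lift_psiE. Qed.

Lemma lift_phi_eq_lift_psi : phi ** wl t' omega = wr omega t ** psi -> lift_phi = lift_psi.
Proof. intro H. rewrite lift_phiE, lift_psiE, H. reflexivity. Qed.

Lemma is_EM2cell_lift_psi :
  is_EM2cell mu eta' psi phi lift_psi
  <-> wr omega t ** psi
      = act phi ** wl t' (wr omega t) ** wl t' psi ** wl t' (wr eta' V) ** wl t' (lu' V).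
Proof.
  rewrite is_EM2cellE, act_wl_lift_psi, rmul_lift_psi.
  split.
  - intros [H _]. exact H.
  - intro H. split; [exact H |]. symmetry. exact (act_unit_lift_psi H).
Qed.

Lemma is_EM2cell_lift_psi_act_unit :
  is_EM2cell mu eta' psi phi lift_psi
  <-> act_unit phi ** lift_psi = lift_psi
      /\ act_unit phi ** wr omega t ** psi
         = act phi ** wl t' (wr omega t) ** wl t' psi ** wl t' (wr eta' V) ** wl t' (lu' V).
Proof.
  rewrite is_EM2cell_lift_psi, act_wl_lift_psi, <- (vcompA (act_unit phi)).
  split.
  - intro H. split; [exact (act_unit_lift_psi H) |].
    rewrite H. apply (act_unit_act phi_EM1cell).
  - intros [Hfix Heq].
    transitivity (rmul W ** wr (act_unit phi ** lift_psi) t ** psi).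
    + rewrite Hfix. symmetry. apply rmul_lift_psi.
    + rewrite rmul_act_unit, rmul_lift_psi. exact Heq.
Qed.

Lemma is_EM2cell_lift_phi :
  is_EM2cell mu eta' psi phi lift_phi
  <-> phi ** wl t' omega = act_unit phi ** wr omega t ** psi.
Proof.
  rewrite is_EM2cellE, act_lift_phi, rmul_lift_phi, <- (vcompA (act_unit phi)).
  split.
  - intros [H _]. symmetry. exact H.
  - intro H. split; symmetry; [exact H | apply act_unit_lift_phi].
Qed.

Lemma is_EM2cell_lift_phi_act_unit :
  is_EM2cell mu eta' psi phi lift_phi
  <-> act_unit phi ** wr omega t ** psi ** wr eta' V ** lu' V = lift_phi
      /\ act_unit phi ** wr omega t ** psi
         = act phi ** wl t' (wr omega t) ** wl t' psi ** wl t' (wr eta' V) ** wl t' (lu' V).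
Proof.
  set (D := wr omega t ** psi).
  assert (unit_D : act_unit phi ** wr omega t ** psi ** wr eta' V ** lu' V
                   = act_unit phi ** D ** lunit V).
  { unfold D. rewrite lunitE. right_assoc. reflexivity. }
  rewrite is_EM2cell_lift_phi, act_wl_lift_psi, unit_D, <- (vcompA (act_unit phi)).
  rewrite lift_psiE. fold D.
  split.
  - intro H. rewrite <- H, <- lift_phiE. split; [reflexivity |].
    assert (act_D : act phi ** wl t' D = phi ** wl t' omega ** lmul V).
    { rewrite <- act_wl_phi_omega, H, act_unit_vcomp. symmetry.
      apply (act_wl_act_lunit phi_EM1cell). }
    rewrite wl_vcomp, vcompA, act_D. right_assoc.
    rewrite lmul_wl_lunit, vcomp_id2. reflexivity.
  - intros [Hfix Heq].
    rewrite <- act_lift_phi, <- Hfix, Heq. apply (act_wl_act_lunit phi_EM1cell).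
Qed.

Lemma lift_cells_iff :
  phi ** wl t' omega = wr omega t ** psi
  <-> is_EM2cell mu eta' psi phi lift_phi /\ is_EM2cell mu eta' psi phi lift_psi.
Proof.
  rewrite is_EM2cell_lift_phi, is_EM2cell_lift_psi, act_wl_lift_psi,
    <- (vcompA (act_unit phi)).
  split.
  - intro H. split.
    + rewrite <- H, <- act_lift_phi, (act_unit_act phi_EM1cell). reflexivity.
    + rewrite <- H, <- (lift_phi_eq_lift_psi H), act_lift_phi. reflexivity.
  - intros [Hphi Hpsi]. rewrite Hphi, Hpsi, (act_unit_act phi_EM1cell). reflexivity.
Qed.

End Lifts.
End Monads.

Unset Implicit Arguments.
Set Strict Implicit.

Theorem lemma1p2 (K : TwoCat) (k k' : Obj K)
    (t : Hom k k) (mu : Cell (comp1 t t) t) (eta : Cell (id1 k) t)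
    (Hmon : is_monad mu eta)
    (t' : Hom k' k') (mu' : Cell (comp1 t' t') t') (eta' : Cell (id1 k') t')
    (Hmon' : is_monad mu' eta')
    (V : Hom k k') (psi : Cell (comp1 t' V) (comp1 V t))
    (HV : is_EM1cell mu mu' psi)
    (W : Hom k k') (phi : Cell (comp1 t' W) (comp1 W t))
    (HW : is_EM1cell mu mu' phi)
    (omega : Cell V W) :
  ((is_EM2cell mu eta' psi phi (wr omega t ** psi ** wr eta' V ** lu' V)
    <-> wr omega t ** psi
        = wl W mu ** asc' t t W ** wr phi t ** asc t W t'
          ** wl t' (wr omega t) ** wl t' psi ** wl t' (wr eta' V) ** wl t' (lu' V))
   /\
   (is_EM2cell mu eta' psi phi (wr omega t ** psi ** wr eta' V ** lu' V)
    <-> (wl W mu ** asc' t t W ** wr phi t ** asc t W t'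
           ** wr eta' (comp1 W t) ** lu' (comp1 W t)
           ** (wr omega t ** psi ** wr eta' V ** lu' V)
         = wr omega t ** psi ** wr eta' V ** lu' V
         /\ wl W mu ** asc' t t W ** wr phi t ** asc t W t'
              ** wr eta' (comp1 W t) ** lu' (comp1 W t) ** wr omega t ** psi
            = wl W mu ** asc' t t W ** wr phi t ** asc t W t'
              ** wl t' (wr omega t) ** wl t' psi ** wl t' (wr eta' V) ** wl t' (lu' V))))
  /\
  ((is_EM2cell mu eta' psi phi (phi ** wr eta' W ** lu' W ** omega)
    <-> phi ** wl t' omega
        = wl W mu ** asc' t t W ** wr phi t ** asc t W t'
          ** wr eta' (comp1 W t) ** lu' (comp1 W t) ** wr omega t ** psi)
   /\
   (is_EM2cell mu eta' psi phi (phi ** wr eta' W ** lu' W ** omega)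
    <-> (wl W mu ** asc' t t W ** wr phi t ** asc t W t'
           ** wr eta' (comp1 W t) ** lu' (comp1 W t) ** wr omega t ** psi
           ** wr eta' V ** lu' V
         = phi ** wr eta' W ** lu' W ** omega
         /\ wl W mu ** asc' t t W ** wr phi t ** asc t W t'
              ** wr eta' (comp1 W t) ** lu' (comp1 W t) ** wr omega t ** psi
            = wl W mu ** asc' t t W ** wr phi t ** asc t W t'
              ** wl t' (wr omega t) ** wl t' psi ** wl t' (wr eta' V) ** wl t' (lu' V))))
  /\
  ((phi ** wl t' omega = wr omega t ** psi
    <-> is_EM2cell mu eta' psi phi (phi ** wr eta' W ** lu' W ** omega)
        /\ is_EM2cell mu eta' psi phi (wr omega t ** psi ** wr eta' V ** lu' V))
   /\
   (phi ** wl t' omega = wr omega t ** psi ->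
    phi ** wr eta' W ** lu' W ** omega = wr omega t ** psi ** wr eta' V ** lu' V)).
Proof.
  destruct Hmon as [mu_assoc _]. destruct Hmon' as [_ [mu'_unit_l mu'_unit_r]].
  split; [split | split; [split | split]].
  - exact (is_EM2cell_lift_psi mu'_unit_l phi HV omega).
  - exact (is_EM2cell_lift_psi_act_unit mu_assoc mu'_unit_l HV HW omega).
  - exact (is_EM2cell_lift_phi mu'_unit_r psi HW omega).
  - exact (is_EM2cell_lift_phi_act_unit mu_assoc mu'_unit_r psi HW omega).
  - exact (lift_cells_iff mu_assoc mu'_unit_l mu'_unit_r HV HW omega).
  - exact (@lift_phi_eq_lift_psi K k k' t t' eta' V psi W phi omega).
Qed.
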